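(* Let $n_1,n_2$ be positive integers. Fix $L\in\mathbb{R}^{n_1\times n_2}$ of rank $r$, a basis matrix $G\in\mathbb{R}^{n_1\times r_G}$ with $L_{\mathrm{new}}:=(I-GG^\top)L$ of rank less than $r$, and a matrix $S_0\in\mathbb{R}^{n_1\times n_2}$ with all entries nonzero. For a random subset $\Omega$ of $\{1,\dots,n_1\}\times\{1,\dots,n_2\}$, let $S=\mathcal P_\Omega S_0$, $M=L+S$, and let ''Success'' be the event that $(L_{\mathrm{new}},S,L^\top G)$ is the unique solution of $$\min_{\tilde L_{\mathrm{new}},\tilde S,\tilde X}\|\tilde L_{\mathrm{new}}\|_*+\lambda\|\tilde S\|_1\ \text{ s.t. }\ \tilde L_{\mathrm{new}}+G\tilde X^\top+\tilde S=M.$$ If $m_1<m_2<n_1n_2$, then $\mathbb{P}_{\mathrm{Unif}(m_1)}(\mathrm{Success})\ge\mathbb{P}_{\mathrm{Unif}(m_2)}(\mathrm{Success})$.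
   Context: $\mathcal P_\Omega S_0$ keeps the entries of $S_0$ indexed by $\Omega$ and zeroes the rest. $\mathbb{P}_{\mathrm{Unif}(m)}$ is probability when $\Omega$ is uniformly distributed among all index subsets of size $m$. A basis matrix satisfies $G^\top G=I$. $\lambda>0$ is fixed; the variables range over $\tilde L_{\mathrm{new}},\tilde S\in\mathbb{R}^{n_1\times n_2}$, $\tilde X\in\mathbb{R}^{n_2\times r_G}$. *)

From HB Require Import structures.
From mathcomp Require Import all_boot all_order all_algebra.
From mathcomp Require Import boolp reals.
From Stdlib Require Import ClassicalEpsilon.
Set Implicit Arguments. Unset Strict Implicit. Unset Printing Implicit Defensive.
Import Order.TTheory GRing.Theory Num.Theory.
Local Open Scope ring_scope.

Section Defs.
Variable R : realType.

Definition is_svd (n1 n2 : nat) (A : 'M[R]_(n1, n2))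
  (U : 'M[R]_(n1, minn n1 n2)) (s : 'rV[R]_(minn n1 n2))
  (V : 'M[R]_(n2, minn n1 n2)) : Prop :=
  [/\ U^T *m U = 1%:M, V^T *m V = 1%:M, (forall i, 0 <= s 0 i)
    & A = U *m diag_mx s *m V^T].

Definition nucnorm (n1 n2 : nat) (A : 'M[R]_(n1, n2)) : R :=
  epsilon (inhabits 0) (fun x : R =>
    exists U s V, is_svd A U s V /\ x = \sum_(i < minn n1 n2) s 0 i).

Definition l1norm (n1 n2 : nat) (A : 'M[R]_(n1, n2)) : R :=
  \sum_(i < n1) \sum_(j < n2) `|A i j|.

Definition projOmega (n1 n2 : nat) (Omega : {set 'I_n1 * 'I_n2})
  (S0 : 'M[R]_(n1, n2)) : 'M[R]_(n1, n2) :=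
  \matrix_(i, j) (if (i, j) \in Omega then S0 i j else 0).

Definition rpca_feasible (n1 n2 rG : nat) (G : 'M[R]_(n1, rG))
  (M : 'M[R]_(n1, n2)) (Ln S : 'M[R]_(n1, n2)) (X : 'M[R]_(n2, rG)) : Prop :=
  Ln + G *m X^T + S = M.

Definition rpca_obj (n1 n2 : nat) (lam : R) (Ln S : 'M[R]_(n1, n2)) : R :=
  nucnorm Ln + lam * l1norm S.

Definition rpca_minimizer (n1 n2 rG : nat) (lam : R) (G : 'M[R]_(n1, rG))
  (M : 'M[R]_(n1, n2)) (Ln S : 'M[R]_(n1, n2)) (X : 'M[R]_(n2, rG)) : Prop :=
  rpca_feasible G M Ln S X /\
  forall Ln' S' X', rpca_feasible G M Ln' S' X' ->
    rpca_obj lam Ln S <= rpca_obj lam Ln' S'.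

Definition rpca_unique_solution (n1 n2 rG : nat) (lam : R) (G : 'M[R]_(n1, rG))
  (M : 'M[R]_(n1, n2)) (Ln S : 'M[R]_(n1, n2)) (X : 'M[R]_(n2, rG)) : Prop :=
  rpca_minimizer lam G M Ln S X /\
  forall Ln' S' X', rpca_minimizer lam G M Ln' S' X' ->
    (Ln', S', X') = (Ln, S, X).

Definition success (n1 n2 rG : nat) (lam : R) (L S0 : 'M[R]_(n1, n2))
  (G : 'M[R]_(n1, rG)) (Omega : {set 'I_n1 * 'I_n2}) : Prop :=
  let S := projOmega Omega S0 in
  let M := L + S in
  let Lnew := (1%:M - G *m G^T) *m L in
  rpca_unique_solution lam G M Lnew S (L^T *m G).

Definition probUnif (n1 n2 : nat) (m : nat) (E : {set 'I_n1 * 'I_n2} -> Prop) : R :=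
  (#|[set Om : {set 'I_n1 * 'I_n2} | (#|Om| == m) && `[< E Om >]]|)%:R /
  (#|[set Om : {set 'I_n1 * 'I_n2} | #|Om| == m]|)%:R.

End Defs.

From HB Require Import structures.
From mathcomp Require Import all_boot all_order all_algebra.
From mathcomp Require Import boolp reals.
From mathcomp Require Import lra.
Set Implicit Arguments. Unset Strict Implicit. Unset Printing Implicit Defensive.
Import Order.TTheory GRing.Theory Num.Theory.
Local Open Scope ring_scope.

(* Success is inherited by every subset of a successful support: moving the
   entries of P_(Om \ Om') S0 from the sparse term into the data M changes the
   objective by the constant lam * ||P_(Om \ Om') S0||_1 on the solution and by
   at most that much elsewhere, since the supports are disjoint.  Hence the
   successful supports form a down-closed family F, and double counting the
   pairs (A, x) with A in F, |A| = k+1, x in A gives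
   (k+1) |F_(k+1)| <= (|T| - k) |F_k|, i.e. |F_k| / C(|T|, k) is nonincreasing. *)

Section SparseShift.
Variable R : realType.

Lemma l1normD n1 n2 (A B : 'M[R]_(n1, n2)) :
  l1norm (A + B) <= l1norm A + l1norm B.
Proof.
rewrite /l1norm -big_split; apply: ler_sum => i _.
rewrite -big_split; apply: ler_sum => j _; rewrite mxE; exact: ler_normD.
Qed.

Lemma projOmega_setID n1 n2 (Om Om' : {set 'I_n1 * 'I_n2}) (S0 : 'M[R]_(n1, n2)) :
  projOmega Om S0 = projOmega (Om :&: Om') S0 + projOmega (Om :\: Om') S0.
Proof.
apply/matrixP => i j; rewrite !mxE !inE.
by case: ((i, j) \in Om'); case: ((i, j) \in Om) => /=; rewrite ?addr0 ?add0r.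
Qed.

Lemma l1norm_projOmega_setID n1 n2 (Om Om' : {set 'I_n1 * 'I_n2})
    (S0 : 'M[R]_(n1, n2)) :
  l1norm (projOmega Om S0) =
  l1norm (projOmega (Om :&: Om') S0) + l1norm (projOmega (Om :\: Om') S0).
Proof.
rewrite /l1norm -big_split; apply: eq_bigr => i _.
rewrite -big_split; apply: eq_bigr => j _; rewrite !mxE !inE.
by case: ((i, j) \in Om'); case: ((i, j) \in Om) => /=; rewrite ?normr0 ?addr0 ?add0r.
Qed.

Section Shift.
Variables (n1 n2 rG : nat) (lam : R) (G : 'M[R]_(n1, rG)).
Variables (M D : 'M[R]_(n1, n2)).
Hypothesis lam_ge0 : 0 <= lam.

Lemma rpca_feasible_shift (A B : 'M[R]_(n1, n2)) (C : 'M[R]_(n2, rG)) :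
  rpca_feasible G M A B C <-> rpca_feasible G (M + D) A (B + D) C.
Proof.
rewrite /rpca_feasible addrA; split=> [-> // | /addIr //].
Qed.

Lemma rpca_obj_shift_le (A B : 'M[R]_(n1, n2)) :
  rpca_obj lam A (B + D) <= rpca_obj lam A B + lam * l1norm D.
Proof.
by rewrite /rpca_obj -addrA lerD2l -mulrDr ler_wpM2l // l1normD.
Qed.

Lemma rpca_unique_solution_unshift (Ln S : 'M[R]_(n1, n2)) (X : 'M[R]_(n2, rG)) :
  l1norm (S + D) = l1norm S + l1norm D ->
  rpca_unique_solution lam G (M + D) Ln (S + D) X ->
  rpca_unique_solution lam G M Ln S X.
Proof.
move=> l1_split [[feasD minD] uniqD].
have objS : rpca_obj lam Ln (S + D) = rpca_obj lam Ln S + lam * l1norm D.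
  by rewrite /rpca_obj l1_split mulrDr addrA.
have feas : rpca_feasible G M Ln S X by apply/rpca_feasible_shift.
have minS : forall A B C, rpca_feasible G M A B C ->
    rpca_obj lam Ln S <= rpca_obj lam A B.
  move=> A B C /rpca_feasible_shift /minD.
  have := rpca_obj_shift_le A B; rewrite objS; lra.
split=> [|A B C [feasABC minABC]]; first by split.
have minShifted : rpca_minimizer lam G (M + D) A (B + D) C.
  split=> [|A' B' C' /minD]; first exact/rpca_feasible_shift.
  have := minABC _ _ _ feas; have := rpca_obj_shift_le A B; rewrite objS; lra.
by case: (uniqD _ _ _ minShifted) => -> /addIr -> ->.
Qed.

End Shift.

Lemma success_subset n1 n2 rG (lam : R) (L S0 : 'M[R]_(n1, n2))
    (G : 'M[R]_(n1, rG)) (Om Om' : {set 'I_n1 * 'I_n2}) :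
  0 <= lam -> Om' \subset Om ->
  success lam L S0 G Om -> success lam L S0 G Om'.
Proof.
move=> lam_ge0 /setIidPr subOm; rewrite /success.
have l1_split := l1norm_projOmega_setID Om Om' S0.
rewrite (projOmega_setID Om Om' S0) subOm addrA in l1_split *.
exact: rpca_unique_solution_unshift.
Qed.

End SparseShift.

Section DownClosedFamilies.
Variables (T : finType) (P : pred {set T}).
Hypothesis P_down : forall A B : {set T}, P A -> B \subset A -> P B.

Definition card_of_size k := #|[set A : {set T} | (#|A| == k) && P A]|.

Lemma card_setX_dep (F : {set {set T}}) (g : {set T} -> {set T}) :
  #|[set p : {set T} * T | (p.1 \in F) && (p.2 \in g p.1)]| = \sum_(A in F) #|g A|.
Proof.
rewrite -sum1_card (eq_bigr (fun A => \sum_(x in g A) 1)) => [|A _];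
  last by rewrite sum1_card.
by rewrite pair_big_dep /=; apply: eq_bigl => p; rewrite inE.
Qed.

Lemma card_of_size_succ k :
  (card_of_size k.+1 * k.+1 <= card_of_size k * (#|T| - k))%N.
Proof.
rewrite /card_of_size.
set Fk1 := [set A : {set T} | (#|A| == k.+1) && P A].
set Fk := [set A : {set T} | (#|A| == k) && P A].
pose marked := [set p : {set T} * T | (p.1 \in Fk1) && (p.2 \in p.1)].
pose unmarked := [set p : {set T} * T | (p.1 \in Fk) && (p.2 \in ~: p.1)].
have card_marked : #|marked| = (#|Fk1| * k.+1)%N.
  rewrite (card_setX_dep Fk1 id) -sum_nat_const; apply: eq_bigr => A.
  by rewrite inE => /andP[/eqP -> _].
have card_unmarked : #|unmarked| = (#|Fk| * (#|T| - k))%N.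
  rewrite (card_setX_dep Fk (fun A => ~: A)) -sum_nat_const; apply: eq_bigr => A.
  by rewrite inE => /andP[/eqP <- _]; rewrite -(cardsC A) addKn.
rewrite -card_marked -card_unmarked.
pose unmark (p : {set T} * T) := (p.1 :\ p.2, p.2).
have unmark_inj : {in marked &, injective unmark}.
  move=> [A x] [A' x']; rewrite /unmark !inE /= => /andP[_ xA] /andP[_ xA'] [eA ex]; subst x'.
  by rewrite -(setD1K xA) -(setD1K xA') eA.
rewrite -(card_in_imset unmark_inj); apply: subset_leq_card.
apply/subsetP => _ /imsetP[[A x] + ->]; rewrite !inE /= => /andP[/andP[cardA PA] xA].
rewrite eqxx (P_down PA (subD1set _ _)) !andbT.
by move: cardA; rewrite (cardsD1 x) xA.
Qed.

Variable R : realType.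

Definition frac_of_size k : R := (card_of_size k)%:R / ('C(#|T|, k))%:R.

Lemma frac_of_size_succ k : frac_of_size k.+1 <= frac_of_size k.
Proof.
rewrite /frac_of_size; have [-> | bin_gt0'] := posnP 'C(#|T|, k.+1).
  by rewrite invr0 mulr0 divr_ge0.
have bin_k_gt0 : (0 < 'C(#|T|, k))%N by move: bin_gt0'; rewrite !bin_gt0 => /ltnW.
rewrite ler_pdivrMr ?ltr0n // mulrAC ler_pdivlMr ?ltr0n // -!natrM ler_nat.
rewrite -(leq_pmul2l (ltn0Sn k)) [X in (_ <= X)%N]mulnCA mul_bin_left.
by rewrite !mulnA (mulnC k.+1) leq_mul2r card_of_size_succ orbT.
Qed.

Lemma frac_of_size_nonincreasing m1 m2 :
  (m1 <= m2)%N -> frac_of_size m2 <= frac_of_size m1.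
Proof.
elim: m2 => [|m2 IH]; first by rewrite leqn0 => /eqP ->.
rewrite leq_eqVlt => /orP[/eqP -> // | lt_m1m2].
exact: le_trans (frac_of_size_succ m2) (IH lt_m1m2).
Qed.

End DownClosedFamilies.

Theorem proposition2 (R : realType) (n1 n2 rG r : nat) (lam : R)
  (L : 'M[R]_(n1, n2)) (G : 'M[R]_(n1, rG)) (S0 : 'M[R]_(n1, n2))
  (m1 m2 : nat) :
  (0 < n1)%N -> (0 < n2)%N -> 0 < lam ->
  \rank L = r ->
  G^T *m G = 1%:M ->
  (\rank ((1%:M - G *m G^T) *m L) < r)%N ->
  (forall i j, S0 i j != 0) ->
  (m1 < m2)%N -> (m2 < n1 * n2)%N ->
  probUnif R m1 (success lam L S0 G) >= probUnif R m2 (success lam L S0 G).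
Proof.
move=> _ _ lam_gt0 _ _ _ _ lt_m1m2 _.
pose P Om := `[< success lam L S0 G Om >].
have P_down : forall A B : {set _}, P A -> B \subset A -> P B.
  move=> A B /asboolP succA subBA; apply/asboolP.
  exact: success_subset (ltW lam_gt0) subBA succA.
have := frac_of_size_nonincreasing P_down R (ltnW lt_m1m2).
by rewrite /frac_of_size /card_of_size /probUnif !card_draws.
Qed.
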